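(* Let $p\in(0,1)$ and consider the house-of-cards Markov chain on state space $\mathbb{N}\cup\{0\}$ with transition probabilities $p_{i0}=p$ and $p_{i(i+1)}=1-p$ for all $i\in\mathbb{N}\cup\{0\}$ (and $p_{ik}=0$ otherwise). Then there do not exist positive reals $\{\alpha_k\}_{k\ge0},\{\beta_i\}_{i\ge0}$ and constants $M_1,M_2>0$ such that $$\sum_{k=0}^\infty p_{ik}\alpha_k\le M_1\beta_i\ \ \text{for all } i\ge0\qquad\text{and}\qquad \sum_{i=0}^\infty p_{ik}\beta_i\le M_2\alpha_k\ \ \text{for all }k\ge0.$$ *)

From Stdlib Require Import Reals.
From Coquelicot Require Import Coquelicot.
Open Scope R_scope.

Definition hoc (p : R) (i k : nat) : R :=
  (if Nat.eqb k 0 then p else 0) + (if Nat.eqb k (S i) then 1 - p else 0).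

(* "sum_{n>=0} a n <= c" for a series of nonnegative terms (value in [0,+oo]):
   the series converges and its sum is at most c. *)
Definition series_le (a : nat -> R) (c : R) : Prop :=
  ex_series a /\ Series a <= c.

From Stdlib Require Import Reals Lra.
From Coquelicot Require Import Coquelicot.
Open Scope R_scope.

(* Every state of the house-of-cards chain jumps to 0 with
   probability p.  Hence the row inequality for state i contains the term
   p * alpha_0, so  M1 * beta_i >= p * alpha_0 > 0  for every i: the weights
   beta are bounded below by a positive constant.  On the other hand the
   column inequality for k = 0 reads  sum_i p * beta_i <= M2 * alpha_0,  so the
   series sum_i p * beta_i converges and its terms must tend to 0.  These two
   facts are incompatible. *)

Lemma Series_nonneg (a : nat -> R) :
  (forall n, 0 <= a n) -> ex_series a -> 0 <= Series a.
Proof.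
  intros Ha Hex.
  assert (Hzero : Series (fun n => 0 * a n) = 0) by (rewrite Series_scal_l; ring).
  rewrite <- Hzero. apply Series_le; [|exact Hex].
  intros n. rewrite Rmult_0_l. split; [lra | apply Ha].
Qed.

Lemma Series_head_le (a : nat -> R) :
  (forall n, 0 <= a n) -> ex_series a -> a 0%nat <= Series a.
Proof.
  intros Ha Hex.
  rewrite (Series_incr_1 a Hex).
  assert (Htail : 0 <= Series (fun k => a (S k))).
  { apply Series_nonneg; [intros n; apply Ha | exact (proj1 (ex_series_incr_1 a) Hex)]. }
  lra.
Qed.

Lemma not_ex_series_bounded_below (a : nat -> R) (c : R) :
  0 < c -> (forall n, c <= a n) -> ~ ex_series a.
Proof.
  intros Hc Hle Hex.
  pose proof (is_lim_seq_le (fun _ => c) a c 0 Hle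
                (is_lim_seq_const c) (ex_series_lim_0 a Hex)) as Hlim.
  simpl in Hlim. lra.
Qed.

Lemma hoc_nonneg (p : R) (i k : nat) : 0 <= p <= 1 -> 0 <= hoc p i k.
Proof.
  intros Hp. unfold hoc.
  destruct (Nat.eqb k 0), (Nat.eqb k (S i)); lra.
Qed.

Lemma hoc_to_zero (p : R) (i : nat) : hoc p i 0 = p.
Proof. unfold hoc. simpl. ring. Qed.

Lemma row_bound_ge_return_term (p c : R) (alpha : nat -> R) (i : nat) :
  0 <= p <= 1 -> (forall k, 0 < alpha k) ->
  series_le (fun k => hoc p i k * alpha k) c -> p * alpha 0%nat <= c.
Proof.
  intros Hp Ha [Hex Hsum].
  pose proof (Series_head_le (fun k => hoc p i k * alpha k)) as Hhead.
  simpl in Hhead. rewrite hoc_to_zero in Hhead.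
  enough (p * alpha 0%nat <= Series (fun k => hoc p i k * alpha k)) by lra.
  apply Hhead; [|exact Hex].
  intros k. apply Rmult_le_pos; [apply hoc_nonneg, Hp | left; apply Ha].
Qed.

Theorem mainTheorem6 (p : R) (hp0 : 0 < p) (hp1 : p < 1) :
  ~ exists (alpha beta : nat -> R) (M1 M2 : R),
      (forall k, 0 < alpha k) /\ (forall i, 0 < beta i) /\ 0 < M1 /\ 0 < M2 /\
      (forall i, series_le (fun k => hoc p i k * alpha k) (M1 * beta i)) /\
      (forall k, series_le (fun i => hoc p i k * beta i) (M2 * alpha k)).
Proof.
  intros [alpha [beta [M1 [M2 [Ha [_ [HM1 [_ [Hrow Hcol]]]]]]]]].
  assert (Hp : 0 <= p <= 1) by lra.
  set (b := p * alpha 0%nat / M1).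
  assert (Hb : 0 < b) by (apply Rdiv_lt_0_compat; [apply Rmult_lt_0_compat|]; auto).
  assert (Hbeta : forall i, b <= beta i).
  { intros i. unfold b. apply Rmult_le_reg_l with M1; [exact HM1|].
    field_simplify; [|lra].
    exact (row_bound_ge_return_term p _ alpha i Hp Ha (Hrow i)). }
  apply (not_ex_series_bounded_below (fun i => hoc p i 0 * beta i) (p * b)).
  - apply Rmult_lt_0_compat; assumption.
  - intros i. rewrite hoc_to_zero. apply Rmult_le_compat_l; [lra | apply Hbeta].
  - exact (proj1 (Hcol 0%nat)).
Qed.
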